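(* Let $\Theta_1,\Theta_2,\ldots$ be independent random variables with $\mathbb P(\Theta_j\le\theta)=\theta/(\theta+j-1)$ for $\theta\ge0$ (convention $0/0=1$). For $n\ge1$, let $C_{n,\theta}$ be the composition of $n$ whose binary representation is $(1(\Theta_j\le\theta))_{1\le j\le n}$, and let $(\Pi_{n,\theta},\theta\ge0)$ be the associated partition-valued process. Then for every $n>2$ the process $(\Pi_{n,\theta},\theta\ge0)$ is not a Markov process.
   Context: A composition of $n$ is a sequence of positive integers $(n_1,\ldots,n_k)$ with sum $n$, viewed as $n$ balls in an ordered sequence of $k$ nonempty boxes, the $i$th box containing $n_i$ balls. Its binary representation is the length-$n$ 0/1 sequence formed by concatenating the words $10^{n_1-1},\ldots,10^{n_k-1}$. Given a process $(C_{n,\theta},\theta\ge0)$ of compositions of $n$, the associated partition-valued process $(\Pi_{n,\theta},\theta\ge0)$ is obtained by labelling the $n$ ball positions (left to right) by $\sigma(1),\ldots,\sigma(n)$ for a uniform random permutation $\sigma$ of $[n]$ independent of the compositions (the same $\sigma$ for all $\theta$), and then forgetting the order of the boxes, yielding a partition of $[n]$ into the sets of labels in each box. *)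

From HB Require Import structures.
From mathcomp Require Import all_boot all_order all_algebra all_fingroup.
From mathcomp Require Import all_classical all_reals all_analysis.
Set Implicit Arguments. Unset Strict Implicit. Unset Printing Implicit Defensive.
Import Order.TTheory GRing.Theory Num.Theory.
Local Open Scope classical_set_scope.
Local Open Scope ring_scope.

Definition partition_n (n : nat) := {set {set 'I_n}}.

(* Given the binary representation b (positions 0..n-1, left to right) of a
   composition, the box index of position p is the number of 1's at positions
   <= p.  (If b has leading 1, as always in binary representations, boxes are
   numbered 1..k.) *)
Definition box_index (n : nat) (b : 'I_n -> bool) (p : 'I_n) : nat :=
  \sum_(q < n | (q <= p)%N) (b q : nat).

(* The partition of [n] obtained by labelling position p with sigma p and
   forgetting the order of the boxes. *)
Definition partition_of_composition (n : nat) (b : 'I_n -> bool)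
    (sigma : {perm 'I_n}) : partition_n n :=
  [set [set sigma q | q : 'I_n & box_index b q == box_index b p] | p : 'I_n].

(* CDF of Theta_{j+1}:  P(Theta_{j+1} <= t) = t / (t + j), with 0/0 = 1. *)
Definition theta_cdf (R : realType) (j : nat) (t : R) : R :=
  if t + j%:R == 0 then 1 else t / (t + j%:R).

(* The partition-valued process: Theta j stands for Theta_{j+1} (0-indexed),
   position p (0-indexed) has bit 1(Theta_{p+1} <= theta). *)
Definition Pi_process (T : Type) (R : realType) (n : nat)
    (Theta : nat -> T -> R) (sigma : T -> {perm 'I_n}) (theta : R) (w : T)
    : partition_n n :=
  partition_of_composition (fun p : 'I_n => (Theta (p : nat) w <= theta))
    (sigma w).

(* Markov property (w.r.t. the natural filtration) of a finite-state process
   X indexed by times theta >= 0, stated via finite-dimensional distributions: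
   for all times 0 <= t_0 < ... < t_k < t' and states,
   P(X_{t_0}=a_0,...,X_{t_k}=a_k, X_{t'}=a') P(X_{t_k}=a_k)
     = P(X_{t_0}=a_0,...,X_{t_k}=a_k) P(X_{t_k}=a_k, X_{t'}=a'). *)
Definition is_Markov d (T : measurableType d) (R : realType)
    (P : probability T R) (S : finType) (X : R -> T -> S) : Prop :=
  forall (k : nat) (t : 'I_k.+1 -> R) (t' : R) (a : 'I_k.+1 -> S) (a' : S),
    (forall i, 0 <= t i) ->
    (forall i j : 'I_k.+1, (i < j)%N -> t i < t j) ->
    t ord_max < t' ->
    let past := \bigcap_(i in [set: 'I_k.+1]) [set w | X (t i) w = a i] in
    let now := [set w | X (t ord_max) w = a ord_max] in
    let fut := [set w | X t' w = a'] in
    (P (past `&` fut) * P now = P past * P (now `&` fut))%E.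

(* Look at the times 1 < 2 < 3 and the states "one block" at time 1, "{x} and
   its complement" at time 2 and "all singletons" at time 3.  The middle
   partition comes from two compositions, (1, n-1) and (n-1, 1), whose only cut
   is made by Theta_2 resp. Theta_n.  By independence, the probability of each
   window event (past and future constraints switched on or off) is therefore a
   sum of two products a(past) c(future) + b(past) d(future).  The Markov
   identity P(1,1) P(0,0) = P(1,0) P(0,1) says that the 2x2 determinant of this
   array vanishes; but it factors as det(a,b) det(c,d), and both factors are
   explicit nonzero rational functions of n. *)

From HB Require Import structures.
From mathcomp Require Import all_boot all_order all_algebra all_fingroup.
From mathcomp Require Import all_classical all_reals all_analysis.
From mathcomp Require Import ring lra zify.
Set Implicit Arguments. Unset Strict Implicit. Unset Printing Implicit Defensive.
Import Order.TTheory GRing.Theory Num.Theory.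

Section BoxIndex.
Variables (n : nat) (b : 'I_n.+1 -> bool).
Implicit Types p q r : 'I_n.+1.

Lemma box_indexE p q : p <= q ->
  box_index b q = box_index b p + \sum_(r < n.+1 | p < r <= q) b r.
Proof.
move=> le_pq; rewrite /box_index (bigID (fun r : 'I_n.+1 => r <= p)) /=.
congr (_ + _); apply: eq_bigl => r; last by rewrite -ltnNge andbC.
by case: (leqP r p) => [le_rp|]; rewrite ?andbT ?andbF // (leq_trans le_rp).
Qed.

Lemma eq_box_index p q :
  (box_index b p == box_index b q) =
  [forall r : 'I_n.+1, (minn p q < r <= maxn p q) ==> ~~ b r].
Proof.
wlog le_pq : p q / p <= q => [hwlog|].
  case/orP: (leq_total p q) => [/hwlog //|/hwlog].
  by rewrite eq_sym minnC maxnC.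
rewrite (minn_idPl le_pq) (maxn_idPr le_pq) (box_indexE le_pq).
rewrite -{1}[box_index b p]addn0 eqn_add2l eq_sym sum_nat_eq0.
by apply: eq_forallb => r; case: (b r); rewrite ?implybF ?implybT.
Qed.

Lemma inord_pred r : @inord n r.-1 = r.-1 :> nat.
Proof. exact/inordK/(leq_ltn_trans (leq_pred r) (ltn_ord r)). Qed.

Lemma eq_box_index_pred r : 0 < r ->
  (box_index b (inord r.-1) == box_index b r) = ~~ b r.
Proof.
move=> r_gt0; rewrite eq_box_index inord_pred.
rewrite (minn_idPl (leq_pred r)) (maxn_idPr (leq_pred r)).
apply/forallP/idP => [/(_ r)|nbr s]; first by rewrite leqnn ltn_predL r_gt0.
apply/implyP => /andP[lt_s le_s]; suff -> : s = r by [].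
by apply/val_inj => /=; lia.
Qed.

Lemma box_index_constP :
  (forall p q, box_index b p = box_index b q) <-> (forall r, 0 < r -> ~~ b r).
Proof.
split=> [eq_box r r_gt0 | nb p q]; first by rewrite -eq_box_index_pred // (eq_box _ r).
apply/eqP; rewrite eq_box_index; apply/forallP => r; apply/implyP => /andP[lt_r _].
exact/nb/(leq_ltn_trans (leq0n _) lt_r).
Qed.

Lemma box_index_injP : injective (box_index b) <-> (forall r, 0 < r -> b r).
Proof.
split=> [inj_box r r_gt0 | bT].
  apply: contraT; rewrite -eq_box_index_pred // => /eqP/inj_box.
  by move/(congr1 (@nat_of_ord _)); rewrite inord_pred; lia.
move=> p q /eqP; rewrite eq_box_index => /forallP/(_ (if p < q then q else p)).
have b_gt0 (r s : 'I_n.+1) : r < s -> b s.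
  by move=> lt_rs; apply/bT/(leq_ltn_trans _ lt_rs).
case: (ltngtP p q) => [lt_pq|lt_qp|eq_pq _]; last exact: val_inj.
  by rewrite lt_pq leqnn (b_gt0 p).
by rewrite lt_qp leqnn (b_gt0 q).
Qed.

Lemma eq_box_index_cut (c : nat) : (forall r, 0 < r -> b r = (r == c :> nat)) ->
  forall p q, (box_index b p == box_index b q) = ((p < c) == (q < c)).
Proof.
move=> bc p q; rewrite eq_box_index.
case: (boolP ((p < c) == (q < c))) => cut_pq.
  apply/forallP => r; apply/implyP => /andP[lt_r le_r].
  rewrite bc ?(leq_ltn_trans (leq0n _) lt_r) //; apply/eqP => rc.
  by move: cut_pq lt_r le_r; rewrite rc; lia.
have lt_c : c < n.+1 by move: cut_pq (ltn_ord p) (ltn_ord q); lia.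
apply/negP => /forallP/(_ (Ordinal lt_c)) /=.
by rewrite bc /= ?eqxx ?implybF; move: cut_pq; lia.
Qed.

Lemma box_index_singletonP (y : 'I_n.+1) :
  (forall p q, (box_index b p == box_index b q) = ((p == y) == (q == y))) <->
  (y = ord0 /\ forall r, 0 < r -> b r = (r == 1 :> nat)) \/
  (y = ord_max /\ forall r, 0 < r -> b r = (r == n :> nat)).
Proof.
split=> [box_y | [[-> b1] | [-> bn]] p q]; first last.
- by rewrite (eq_box_index_cut bn) -!val_eqE /=; move: (ltn_ord p) (ltn_ord q); lia.
- by rewrite (eq_box_index_cut b1) -!val_eqE /=; lia.
have b_pred r : 0 < r -> b r = ~~ ((r.-1 == y) == (r == y :> nat)).
  move=> r_gt0; rewrite -[b r]negbK -eq_box_index_pred //.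
  by rewrite box_y -!val_eqE /= inord_pred.
have [y0 | y_gt0] := posnP y.
  by left; split=> [|r r_gt0]; [exact: val_inj | rewrite b_pred // y0; lia].
have [yn | y_neqn] := eqVneq (y : nat) n.
  right; split=> [|r r_gt0]; first exact: val_inj.
  by rewrite b_pred // yn; move: (ltn_ord r); lia.
have lt_ysucc : y.+1 < n.+1 by move: (ltn_ord y) y_neqn; lia.
have := box_y (inord y.-1) (inord y.+1).
rewrite eq_box_index -!val_eqE /= inord_pred inordK //.
rewrite [RHS](_ : _ = true); last by lia.
by move=> /forallP/(_ y); rewrite b_pred //; lia.
Qed.

End BoxIndex.

Lemma preim_partition_eqP (T : finType) (rT rT' : eqType) (f : T -> rT)
    (g : T -> rT') (D : {set T}) :
  preim_partition f D = preim_partition g D <->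
  {in D &, forall x y, (f x == f y) = (g x == g y)}.
Proof.
have preim_equiv (aT : eqType) (h : T -> aT) :
    {in D & &, equivalence_rel (fun x y => h x == h y)}.
  by split=> // /eqP->.
split=> [eq_fg x y Dx Dy | eq_fg].
  rewrite -(pblock_equivalence_partition (preim_equiv _ f) Dx Dy).
  by rewrite -/(preim_partition f D) eq_fg pblock_equivalence_partition.
apply: eq_in_imset => x Dx; apply/setP => y; rewrite !inE.
by case: (boolP (y \in D)) => //= Dy; apply: eq_fg.
Qed.

Section PreimPartitions.
Variable T : finType.

Lemma preim_partition_const (x0 : T) :
  preim_partition (fun _ => tt) [set: T] = [set [set: T]].
Proof.
apply/setP => B; rewrite inE; apply/imsetP/eqP => [[x _ ->] | ->].
  by apply/setP => y; rewrite !inE.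
by exists x0 => //; apply/setP => y; rewrite !inE.
Qed.

Lemma preim_partition_id : preim_partition id [set: T] = [set [set x] | x : T].
Proof.
apply/setP => B; apply/imsetP/imsetP => -[x _ ->]; exists x => //;
  by apply/setP => y; rewrite !inE eq_sym.
Qed.

Lemma preim_partition_pred1 (x y : T) : y != x ->
  preim_partition (pred1 x) [set: T] = [set [set x]; ~: [set x]].
Proof.
move=> ne_yx; apply/setP => B; rewrite !inE; apply/imsetP/orP => [[z _ ->] | ].
  by case: (eqVneq z x) => [->|ne_zx]; [left|right]; apply/eqP/setP => t;
    rewrite !inE ?eqxx ?(negbTE ne_zx) //; case: (t == x).
by case=> /eqP ->; [exists x | exists y] => //; apply/setP => t;
  rewrite !inE ?eqxx ?(negbTE ne_yx) //; case: (t == x).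
Qed.

End PreimPartitions.

Section PartitionOfComposition.
Variables (n : nat) (b : 'I_n -> bool) (s : {perm 'I_n}).

Lemma partition_of_compositionE :
  partition_of_composition b s =
  preim_partition (box_index b \o (s^-1)%g) [set: 'I_n].
Proof.
have mem_block p y :
    (y \in [set s q | q : 'I_n & box_index b q == box_index b p]) =
    (box_index b ((s^-1)%g y) == box_index b p).
  by rewrite -{1}(permKV s y) mem_imset ?inE //; apply: perm_inj.
apply/setP => B; apply/imsetP/imsetP => [[p _ ->] | [x _ ->]].
  by exists (s p) => //; apply/setP => y; rewrite mem_block !inE /= permK eq_sym.
by exists ((s^-1)%g x) => //; apply/setP => y; rewrite mem_block !inE /= eq_sym.
Qed.

Lemma partition_of_composition_preimP (rT : eqType) (g : 'I_n -> rT) :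
  partition_of_composition b s = preim_partition g [set: 'I_n] <->
  forall p q, (box_index b p == box_index b q) = (g (s p) == g (s q)).
Proof.
rewrite partition_of_compositionE preim_partition_eqP /=.
split=> [eq_rel p q | eq_rel x y _ _]; last by rewrite eq_rel !permKV.
by have := eq_rel (s p) (s q); rewrite !inE !permK; apply.
Qed.

End PartitionOfComposition.

Section CompositionStates.
Variables (n : nat) (b : 'I_n.+1 -> bool) (s : {perm 'I_n.+1}).
Implicit Types p q r : 'I_n.+1.

Lemma partition_of_composition_one_block :
  partition_of_composition b s = [set [set: 'I_n.+1]] <->
  (forall r, 0 < r -> ~~ b r).
Proof.
rewrite -(preim_partition_const ord0) partition_of_composition_preimP.
rewrite -box_index_constP.
by split=> eq_box p q; [apply/eqP; rewrite eq_box | rewrite (eq_box p q) eqxx].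
Qed.

Lemma partition_of_composition_singletons :
  partition_of_composition b s = [set [set i] | i : 'I_n.+1] <->
  (forall r, 0 < r -> b r).
Proof.
rewrite -preim_partition_id partition_of_composition_preimP -box_index_injP.
split=> [eq_box p q /eqP | inj_box p q]; last first.
  by rewrite (inj_eq inj_box) (inj_eq perm_inj).
by rewrite eq_box (inj_eq perm_inj) => /eqP.
Qed.

Lemma partition_of_composition_two_blocks (x : 'I_n.+1) : 0 < n ->
  partition_of_composition b s = [set [set x]; ~: [set x]] <->
  (s ord0 = x /\ forall r, 0 < r -> b r = (r == 1 :> nat)) \/
  (s ord_max = x /\ forall r, 0 < r -> b r = (r == n :> nat)).
Proof.
move=> n_gt0; have [y ne_yx] : exists y, y != x.
  case: (eqVneq x ord0) => [->|ne_x0]; last by exists ord0; rewrite eq_sym.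
  by exists ord_max; rewrite -val_eqE /= -lt0n.
have s_eq p : (s p == x) = (p == (s^-1)%g x).
  by rewrite -[RHS](inj_eq (@perm_inj _ s)) permKV.
rewrite -(preim_partition_pred1 ne_yx) partition_of_composition_preimP.
apply: iff_trans (iff_trans (box_index_singletonP b ((s^-1)%g x)) _).
  by split=> eq_box p q; rewrite eq_box /= !s_eq.
by split=> -[[sx b_cut]|[sx b_cut]]; [left|right|left|right];
  split=> //; rewrite -sx ?permK ?permKV.
Qed.

End CompositionStates.

Local Open Scope classical_set_scope.
Local Open Scope ring_scope.

Lemma det2_rank2 (R : comPzRingType) (A B C D : bool -> R) :
  (A true * C true + B true * D true) * (A false * C false + B false * D false) -
  (A true * C false + B true * D false) * (A false * C true + B false * D true) =
  (A true * B false - A false * B true) * (C true * D false - C false * D true).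
Proof. by ring. Qed.

Lemma prodr_ord_split_ends (R : pzSemiRingType) (k : nat) (g : nat -> R) :
  \prod_(j < k.+3) g j = g 0%N * g 1%N * \prod_(i < k) g i.+2 * g k.+2.
Proof. by rewrite big_ord_recr /= !big_ord_recl /= !mulrA. Qed.

Section ThetaLaw.
Variable R : realType.

Lemma theta_cdfE (j : nat) (t : R) : (0 < j)%N -> 0 <= t ->
  theta_cdf j t = t / (t + j%:R).
Proof.
move=> j_gt0 t_ge0; rewrite /theta_cdf; case: eqP => // tj0.
by have := ltr_wpDl t_ge0 (ltr0Sn R j.-1); rewrite prednK // tj0 ltxx.
Qed.

Definition cut_prob (j : nat) (past : bool) : R :=
  if past then theta_cdf j 2 - theta_cdf j 1 else theta_cdf j 2.

Definition nocut_prob (j : nat) (future : bool) : R :=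
  if future then theta_cdf j 3 - theta_cdf j 2 else 1 - theta_cdf j 2.

Lemma nocut_prob_gt0 j future : (0 < j)%N -> 0 < nocut_prob j future.
Proof.
move=> j_gt0; have x_gt0 : 0 < (j%:R : R) by rewrite ltr0n.
rewrite /nocut_prob !theta_cdfE ?ler0n //; case: future.
  have -> : 3 / (3 + j%:R) - 2 / (2 + j%:R) =
      j%:R / ((3 + j%:R) * (2 + j%:R)) :> R.
    by field; apply/andP; split; apply: lt0r_neq0; apply: addr_gt0.
  by apply: divr_gt0 => //; apply: mulr_gt0; apply: addr_gt0.
have -> : 1 - 2 / (2 + j%:R) = j%:R / (2 + j%:R) :> R.
  by field; apply: lt0r_neq0; apply: addr_gt0.
by apply: divr_gt0 => //; apply: addr_gt0.
Qed.

Lemma cut_prob_det_neq0 m : (1 < m)%N ->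
  cut_prob 1 true * cut_prob m false - cut_prob 1 false * cut_prob m true != 0.
Proof.
move=> m_gt1; have x_ge2 : 2 <= (m%:R : R) by rewrite ler_nat.
rewrite /cut_prob !theta_cdfE ?ler0n ?(ltnW m_gt1) //.
set x : R := m%:R.
have det_val : (2 / (2 + 1) - 1 / (1 + 1)) * (2 / (2 + x)) -
    2 / (2 + 1) * (2 / (2 + x) - 1 / (1 + x)) = (1 - x) / (3 * (1 + x) * (2 + x)).
  by field; do ?[apply/andP; split]; apply/eqP => ?; lra.
rewrite det_val; apply/eqP => /(congr1 ( *%R^~ (3 * (1 + x) * (2 + x)))).
by rewrite mul0r divfK; [lra | do 2?apply: mulf_neq0; apply/eqP; lra].
Qed.

Lemma nocut_prob_det_neq0 m : (1 < m)%N ->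
  nocut_prob m true * nocut_prob 1 false - nocut_prob m false * nocut_prob 1 true != 0.
Proof.
move=> m_gt1; have x_ge2 : 2 <= (m%:R : R) by rewrite ler_nat.
rewrite /nocut_prob !theta_cdfE ?ler0n ?(ltnW m_gt1) //.
set x : R := m%:R.
have det_val : (3 / (3 + x) - 2 / (2 + x)) * (1 - 2 / (2 + 1)) -
    (1 - 2 / (2 + x)) * (3 / (3 + 1) - 2 / (2 + 1)) =
    x * (1 - x) / (12 * (2 + x) * (3 + x)).
  by field; do ?[apply/andP; split]; apply/eqP => ?; lra.
rewrite det_val; apply/eqP => /(congr1 ( *%R^~ (12 * (2 + x) * (3 + x)))).
by rewrite mul0r divfK; [nra | do 2?apply: mulf_neq0; apply/eqP; lra].
Qed.

End ThetaLaw.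
Arguments cut_prob {R}.
Arguments nocut_prob {R}.

Section ProbabilityFacts.
Variables (d : measure_display) (T : measurableType d) (R : realType).
Variable P : probability T R.

Lemma probability_itv_oc (X : {RV P >-> R}) (a b : R) : a <= b ->
  P (X @^-1` `]a, b]) = (cdf X b - cdf X a)%E.
Proof.
move=> le_ab; have -> : X @^-1` `]a, b] = X @^-1` `]-oo, b] `\` X @^-1` `]-oo, a].
  apply/seteqP; split=> w; rewrite /= !in_itv /=.
    by move=> /andP[lt_aw le_wb]; split=> //; apply/negP; rewrite -ltNge.
  by move=> [le_wb /negP]; rewrite -ltNge => lt_aw; apply/andP.
have mX r : measurable (X @^-1` `]-oo, r]).
  by apply: measurable_funPTI; exact: measurable_itv.
rewrite measureD ?mX -?ge0_fin_numE ?fin_num_measure //.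
congr (_ - P _)%E; apply/seteqP; split=> [w [] //|w lt_a]; split=> //.
by move: lt_a; rewrite /= !in_itv /= => /le_trans; apply.
Qed.

(* [measureU] restated with [P] as a probability, so that the summands can be
   rewritten with lemmas about [P]. *)
Lemma probabilityU (A B : set T) : measurable A -> measurable B ->
  A `&` B = set0 -> P (A `|` B) = (P A + P B)%E.
Proof. exact: measureU. Qed.

Section FiniteLabel.
Variables (S : eqType) (L : T -> S).
Hypothesis mL : forall s, measurable [set w | L w = s].
Implicit Types (s : S) (l : seq S).

Lemma label_mem_cons s l :
  [set w | L w \in s :: l] = [set w | L w = s] `|` [set w | L w \in l].
Proof.
apply/seteqP; split=> w /=; rewrite in_cons; first by case/orP => [/eqP|]; [left|right].
by case=> [->|->]; rewrite ?eqxx ?orbT.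
Qed.

Lemma measurable_label_mem l : measurable [set w | L w \in l].
Proof.
elim: l => [|s l IH]; last by rewrite label_mem_cons; exact: measurableU.
by rewrite (_ : [set w | _] = set0) //; apply/seteqP; split=> w.
Qed.

Lemma measure_label_setI (E : set T) (c : R) (l : seq S) : measurable E ->
  (forall s, P ([set w | L w = s] `&` E) = (c%:E * P E)%E) -> uniq l ->
  P ([set w | L w \in l] `&` E) = (((size l)%:R * c)%:E * P E)%E.
Proof.
move=> mE PL; elim: l => [_|s l IH /= /andP[s_l uniq_l]].
  by rewrite mul0r mul0e -(measure0 P); congr (P _); apply/seteqP; split=> w [].
rewrite label_mem_cons setIUl probabilityU; first last.
- by apply/seteqP; split=> w // [[Lw _] [Ll _]]; move: s_l; rewrite -Lw Ll.
- exact/measurableI/mE/measurable_label_mem.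
- exact/measurableI/mE/mL.
rewrite PL IH // -(fineK (fin_num_measure P _ mE)) -!EFinM -EFinD.
by congr EFin; rewrite -addn1 natrD; ring.
Qed.

End FiniteLabel.

Section Window.
Variables (S : finType) (X : R -> T -> S) (t0 t1 t2 : R) (a0 a1 a2 : S).

Definition window_event (past future : bool) : set T :=
  [set w | (past -> X t0 w = a0) /\ X t1 w = a1 /\ (future -> X t2 w = a2)].

Lemma window_eventI past :
  window_event past false `&` [set w | X t2 w = a2] = window_event past true.
Proof.
apply/seteqP; split=> w /=; first by case=> -[h0 [h1 _]] h2.
by case=> h0 [h1 h2]; do !split=> //; exact: h2.
Qed.

Lemma is_Markov_window : is_Markov P X -> 0 <= t0 -> t0 < t1 -> t1 < t2 ->
  (P (window_event true true) * P (window_event false false) =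
   P (window_event true false) * P (window_event false true))%E.
Proof.
move=> markov t0_ge0 lt01 lt12.
pose t (i : 'I_2) := if i == ord0 then t0 else t1.
pose a (i : 'I_2) := if i == ord0 then a0 else a1.
have t_ge0 i : 0 <= t i.
  by rewrite /t; case: ifP => // _; exact/ltW/(le_lt_trans t0_ge0).
have t_incr (i j : 'I_2) : (i < j)%N -> t i < t j.
  move=> lt_ij; have := ltn_ord j; rewrite /t -!val_eqE /= => lt_j2.
  by rewrite (_ : i == 0 :> nat) 1?(_ : (j == 0 :> nat) = false) //; lia.
have /= := markov 1%N t t2 a a2 t_ge0 t_incr lt12.
have -> : \bigcap_(i in [set: 'I_2]) [set w | X (t i) w = a i] =
    window_event true false.
  apply/seteqP; split=> w /=.
    move=> past_w; split=> [_|]; first exact: (past_w ord0).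
    by split=> //; exact: (past_w ord_max).
  by move=> [h0 [h1 _]] [[|[|//]] ?] _; [exact: h0 | exact: h1].
have -> : [set w | X t1 w = a1] = window_event false false.
  by apply/seteqP; split=> w /=; [split | case=> _ []].
by rewrite !window_eventI.
Qed.

End Window.

End ProbabilityFacts.

Section NotMarkov.
Variables (d : measure_display) (T : measurableType d) (R : realType).
Variables (P : probability T R) (Theta : nat -> {RV P >-> R}) (k : nat).
Local Notation n := k.+3.
Variable sigma : T -> {perm 'I_n}.
Hypothesis Theta_law : forall (j : nat) (t : R), 0 <= t ->
  P [set w | Theta j w <= t] = (theta_cdf j t)%:E.
Hypothesis Theta_indep : forall (m : nat) (B : nat -> set R),
  (forall j, measurable (B j)) ->
  P (\bigcap_(j in [set j : nat | (j < m)%N]) (Theta j @^-1` B j)) =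
  (\prod_(j < m) P (Theta j @^-1` B j))%E.
Hypothesis sigma_measurable :
  forall s : {perm 'I_n}, measurable [set w | sigma w = s].
Hypothesis sigma_uniform_indep :
  forall (s : {perm 'I_n}) (m : nat) (B : nat -> set R),
  (forall j, measurable (B j)) ->
  P ([set w | sigma w = s]
     `&` \bigcap_(j in [set j : nat | (j < m)%N]) (Theta j @^-1` B j)) =
  (((n`!)%:R^-1)%:E
   * P (\bigcap_(j in [set j : nat | (j < m)%N]) (Theta j @^-1` B j)))%E.

Lemma cdf_Theta j t : 0 <= t -> cdf (Theta j) t = (theta_cdf j t)%:E.
Proof. by move=> t_ge0; rewrite -Theta_law. Qed.

Definition theta_event (B : nat -> set R) : set T :=
  \bigcap_(j in [set j : nat | (j < n)%N]) (Theta j @^-1` B j).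

Lemma measurable_theta_event B : (forall j, measurable (B j)) ->
  measurable (theta_event B).
Proof.
move=> mB; apply: bigcap_measurable => [|j _]; first by exists 0%N.
exact: measurable_funPTI.
Qed.

Lemma theta_eventP B w : theta_event B w <-> forall q : 'I_n, B q (Theta q w).
Proof.
split=> [Bw q | Bw j /= lt_jn]; first exact/Bw/ltn_ord.
exact: (Bw (Ordinal lt_jn)).
Qed.

(* Position 0 always opens a box, so [Theta 0] is left unconstrained. *)
Definition cut_set (c : nat) (past future : bool) (j : nat) : set R :=
  if j == 0%N then setT
  else [set t | (past -> 1 < t) /\ (t <= 2) = (j == c) /\ (future -> t <= 3)].

Lemma cut_setE c past future j : (0 < j)%N ->
  cut_set c past future j =
  if j == c then [set` if past then `]1, 2] else `]-oo, 2]]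
  else [set` if future then `]2, 3] else `]2, +oo[].
Proof.
rewrite /cut_set lt0n => /negbTE ->; apply/seteqP.
case: (j == c); [case: past | case: future]; split=> t /=;
  rewrite ?in_itv /= ?andbT.
- by case=> /(_ isT) lt1 [le2 _]; rewrite lt1 le2.
- by case/andP=> lt1 le2; split=> //; split=> // _; lra.
- by case=> _ [le2 _].
- by move=> le2; split=> //; split=> // _; lra.
- by case=> _ [/negbT]; rewrite -ltNge => lt2 /(_ isT) le3; rewrite lt2 le3.
- case/andP=> lt2 le3; split=> [_|]; first lra.
  by split=> //; apply/negbTE; rewrite -ltNge.
- by case=> _ [/negbT]; rewrite -ltNge.
- by move=> lt2; split=> [_|]; [lra | split=> //; apply/negbTE; rewrite -ltNge].
Qed.

Lemma measurable_cut_set c past future j : measurable (cut_set c past future j).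
Proof.
have [->|j_gt0] := posnP j; first exact: measurableT.
by rewrite cut_setE //; case: ifP => _; exact: measurable_itv.
Qed.

Definition cut_set_prob (c : nat) (past future : bool) (j : nat) : R :=
  if j == 0%N then 1 else if j == c then cut_prob j past else nocut_prob j future.

Lemma probability_cut_set c past future j :
  P (Theta j @^-1` cut_set c past future j) = (cut_set_prob c past future j)%:E.
Proof.
rewrite /cut_set_prob.
have [->|j_gt0] := posnP j; first by rewrite preimage_setT probability_setT.
rewrite cut_setE //; case: ifP => _; [case: past | case: future].
- rewrite probability_itv_oc ?ler1n //.
  by rewrite (cdf_Theta j (ler0n _ 2)) (cdf_Theta j ler01) -EFinB.
- by rewrite /cut_prob -(cdf_Theta j (ler0n _ 2)).
- rewrite probability_itv_oc ?ler_nat //.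
  by rewrite (cdf_Theta j (ler0n _ 3)) (cdf_Theta j (ler0n _ 2)) -EFinB.
- by rewrite -[LHS]/(ccdf _ 2) ccdf_1_cdf (cdf_Theta j (ler0n _ 2)) -EFinB.
Qed.

Lemma probability_cut_event c past future :
  P (theta_event (cut_set c past future)) =
  (\prod_(j < n) cut_set_prob c past future j)%:E.
Proof.
rewrite /theta_event Theta_indep; last exact: measurable_cut_set.
by under eq_bigr do rewrite probability_cut_set; rewrite prodEFin.
Qed.

Definition gap_prob (future : bool) : R :=
  \prod_(i < k) nocut_prob i.+2 future.

Lemma gap_prob_gt0 future : 0 < gap_prob future.
Proof. by apply: prodr_gt0 => i _; apply: nocut_prob_gt0. Qed.

Lemma probability_cut_first past future :
  P (theta_event (cut_set 1 past future)) =
  (cut_prob 1 past * (gap_prob future * nocut_prob k.+2 future))%:E.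
Proof.
rewrite probability_cut_event prodr_ord_split_ends /cut_set_prob /=.
by rewrite mul1r mulrA.
Qed.

Lemma probability_cut_last past future :
  P (theta_event (cut_set k.+2 past future)) =
  (cut_prob k.+2 past * (gap_prob future * nocut_prob 1 future))%:E.
Proof.
rewrite probability_cut_event prodr_ord_split_ends /cut_set_prob /= eqxx mul1r.
rewrite [X in (_ * X * _)%:E](_ : _ = gap_prob future); first by congr EFin; ring.
by apply: eq_bigr => i _; rewrite !eqSS (ltn_eqF (ltn_ord i)).
Qed.

Definition zero_at_prob (i : 'I_n) : R :=
  #|[pred s : {perm 'I_n} | s i == ord0]|%:R / n`!%:R.

Lemma zero_at_prob_gt0 i : 0 < zero_at_prob i.
Proof.
rewrite divr_gt0 // ltr0n ?fact_gt0 //; apply/card_gt0P.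
by exists (tperm i ord0); rewrite inE tpermL.
Qed.

Lemma zero_atE i : [set w | sigma w i = ord0] =
  [set w | sigma w \in enum [pred s : {perm 'I_n} | s i == ord0]].
Proof. by apply/seteqP; split=> w; rewrite /= mem_enum inE => /eqP. Qed.

Lemma measurable_zero_at i : measurable [set w | sigma w i = ord0].
Proof. by rewrite zero_atE; exact: measurable_label_mem. Qed.

Lemma probability_zero_at_setI i B : (forall j, measurable (B j)) ->
  P ([set w | sigma w i = ord0] `&` theta_event B) =
  ((zero_at_prob i)%:E * P (theta_event B))%E.
Proof.
move=> mB; rewrite zero_atE.
rewrite (measure_label_setI sigma_measurable (c := n`!%:R^-1)) -?cardE //.
- exact: measurable_theta_event.
- by move=> s; apply: sigma_uniform_indep.
- exact: enum_uniq.
Qed.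

Lemma theta_event_cut_setP c past future w :
  theta_event (cut_set c past future) w <->
  forall q : 'I_n, (0 < q)%N ->
    [/\ past -> 1 < Theta q w, (Theta q w <= 2) = (q == c :> nat)
       & future -> Theta q w <= 3].
Proof.
rewrite theta_eventP /cut_set; split=> cut_w q.
  by move=> q_gt0; have := cut_w q; rewrite eqn0Ngt q_gt0 => -[? []].
by rewrite eqn0Ngt; case: (boolP (0 < q)%N) => // /cut_w[].
Qed.

Definition one_block : partition_n n := [set [set: 'I_n]]%SET.
Definition two_blocks : partition_n n := [set [set ord0]; ~: [set ord0]]%SET.
Definition singletons : partition_n n := [set [set i] | i : 'I_n]%SET.

Local Notation Pi := (Pi_process (fun j => Theta j : T -> R) sigma).
Local Notation window := (window_event Pi 1 2 3 one_block two_blocks singletons).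

Lemma window_eventE past future :
  window past future =
  ([set w | sigma w ord0 = ord0] `&` theta_event (cut_set 1 past future)) `|`
  ([set w | sigma w ord_max = ord0] `&` theta_event (cut_set k.+2 past future)).
Proof.
have one_blockP w :
    Pi 1 w = one_block <-> forall q : 'I_n, (0 < q)%N -> 1 < Theta q w.
  rewrite /Pi_process partition_of_composition_one_block.
  by split=> h q /h; rewrite ltNge.
have singletonsP w :
    Pi 3 w = singletons <-> forall q : 'I_n, (0 < q)%N -> Theta q w <= 3.
  exact: partition_of_composition_singletons.
have two_blocksP w := partition_of_composition_two_blocks
  (fun p : 'I_n => Theta p w <= 2) (sigma w) ord0 (isT : (0 < k.+2)%N).
apply/seteqP; split=> w /=.
  move=> [h1 [/two_blocksP h2 h3]].
  have cutP c :
      (forall q : 'I_n, (0 < q)%N -> (Theta q w <= 2) = (q == c :> nat)) ->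
      theta_event (cut_set c past future) w.
    move=> h2c; apply/theta_event_cut_setP => q q_gt0.
    by split=> [/h1/one_blockP||/h3/singletonsP]; [apply | apply: h2c | apply].
  by case: h2 => -[s0 /cutP]; [left | right].
case=> -[s0 /theta_event_cut_setP cut_w]; split=> [p|]; try split=> [|f];
  try by [ apply/one_blockP => q /cut_w[/(_ p)]
         | apply/singletonsP => q /cut_w[_ _ /(_ f)] ].
  by apply/two_blocksP; left; split=> // q /cut_w[].
by apply/two_blocksP; right; split=> // q /cut_w[].
Qed.

Definition window_prob (past future : bool) : R :=
  zero_at_prob ord0 * cut_prob 1 past * (gap_prob future * nocut_prob k.+2 future) +
  zero_at_prob ord_max * cut_prob k.+2 past * (gap_prob future * nocut_prob 1 future).

Lemma probability_window past future :
  P (window past future) = (window_prob past future)%:E.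
Proof.
have m_cut c := measurable_theta_event (measurable_cut_set c past future).
rewrite window_eventE probabilityU; first last.
- apply/seteqP; split=> w // -[[s0 _] [sn _]].
  by have /perm_inj/(congr1 val) := etrans s0 (esym sn).
- exact/measurableI/m_cut/measurable_zero_at.
- exact/measurableI/m_cut/measurable_zero_at.
rewrite !probability_zero_at_setI; try exact: measurable_cut_set.
rewrite /window_prob probability_cut_first probability_cut_last.
by rewrite -!EFinM -EFinD !mulrA.
Qed.

Lemma window_prob_det_neq0 :
  window_prob true true * window_prob false false -
  window_prob true false * window_prob false true != 0.
Proof.
rewrite (det2_rank2 (fun past => zero_at_prob ord0 * cut_prob 1 past)
  (fun past => zero_at_prob ord_max * cut_prob k.+2 past)
  (fun future => gap_prob future * nocut_prob k.+2 future)
  (fun future => gap_prob future * nocut_prob 1 future)).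
apply: mulf_neq0.
  rewrite (_ : _ - _ = zero_at_prob ord0 * zero_at_prob ord_max *
    (cut_prob 1 true * cut_prob k.+2 false - cut_prob 1 false * cut_prob k.+2 true));
    last by ring.
  by do 2?apply: mulf_neq0; rewrite ?cut_prob_det_neq0 ?lt0r_neq0 ?zero_at_prob_gt0.
rewrite (_ : _ - _ = gap_prob true * gap_prob false *
  (nocut_prob k.+2 true * nocut_prob 1 false - nocut_prob k.+2 false * nocut_prob 1 true));
  last by ring.
by do 2?apply: mulf_neq0; rewrite ?nocut_prob_det_neq0 ?lt0r_neq0 ?gap_prob_gt0.
Qed.

Lemma Pi_not_Markov : ~ is_Markov P Pi.
Proof.
move=> markov; have := is_Markov_window one_block two_blocks singletons markov
  ler01 (ltr1n _ 2) (ltr_nat _ 2 3).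
rewrite !probability_window -!EFinM => -[] /eqP.
by rewrite -subr_eq0; apply/negP/window_prob_det_neq0.
Qed.

End NotMarkov.

Theorem mainTheorem2 (d : measure_display) (T : measurableType d)
    (R : realType) (P : probability T R)
    (Theta : nat -> {RV P >-> R}) (n : nat) (sigma : T -> {perm 'I_n}) :
  (* Theta j (= Theta_{j+1} in the paper) has P(Theta_{j+1} <= t) = t/(t+j) *)
  (forall (j : nat) (t : R), 0 <= t ->
      P [set w | Theta j w <= t] = (theta_cdf j t)%:E) ->
  (* Theta_1, Theta_2, ... are mutually independent *)
  (forall (m : nat) (B : nat -> set R), (forall j, measurable (B j)) ->
      P (\bigcap_(j in [set j : nat | (j < m)%N]) (Theta j @^-1` B j))
      = (\prod_(j < m) P (Theta j @^-1` B j))%E) ->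
  (* sigma is measurable, uniform on permutations of [n], and independent of
     the whole sequence (Theta_j) *)
  (forall s : {perm 'I_n}, measurable [set w | sigma w = s]) ->
  (forall (s : {perm 'I_n}) (m : nat) (B : nat -> set R),
      (forall j, measurable (B j)) ->
      P ([set w | sigma w = s]
         `&` \bigcap_(j in [set j : nat | (j < m)%N]) (Theta j @^-1` B j))
      = (((n`!)%:R^-1)%:E
        * P (\bigcap_(j in [set j : nat | (j < m)%N]) (Theta j @^-1` B j)))%E) ->
  (2 < n)%N ->
  ~ is_Markov P (Pi_process (fun j => (Theta j : T -> R)) sigma).
Proof.
move=> Theta_law Theta_indep + + n_gt2.
case: n sigma n_gt2 => [|[|[|k]]] // sigma _ sigma_measurable sigma_uniform_indep.
exact: Pi_not_Markov.
Qed.
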